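(* Let $(X,\mathrm{d})$ be a compact metric space and let $f\colon X\to X$ be a bi-Lipschitz homeomorphism such that $\mathrm{d}$ is $f$-hyperbolic. Then $f$ is $\mathrm{d}_W$-robustly expansive: there are $\epsilon,\delta>0$ such that every bi-Lipschitz homeomorphism $g\colon X\to X$ with $\mathrm{d}_W(f,g)<\epsilon$ is expansive with expansive constant $\delta$.
   Context: A homeomorphism $g$ of a compact metric space $(X,\mathrm{d})$ is expansive with expansive constant $\delta>0$ if $\mathrm{d}(g^n(x),g^n(y))\le\delta$ for all $n\in\mathbb Z$ implies $x=y$. A metric $\mathrm{d}$ defining the topology of $X$ is $f$-hyperbolic if there are $\delta>0$ and $\lambda>1$ such that $\mathrm{d}(x,y)<\delta$ implies $\max\{\mathrm{d}(f(x),f(y)),\mathrm{d}(f^{-1}(x),f^{-1}(y))\}\ge\lambda\,\mathrm{d}(x,y)$. For homeomorphisms $f,g$ of $X$, $\mathrm{d}_{C^0}(f,g)=\max_{x}\mathrm{d}(f(x),g(x))+\max_x\mathrm{d}(f^{-1}(x),g^{-1}(x))$. For Lipschitz maps, $\mathrm{d}'_W(f,g)=\sup_{x\ne y}\frac{|\mathrm{d}(f(x),f(y))-\mathrm{d}(g(x),g(y))|}{\mathrm{d}(x,y)}$, and for bi-Lipschitz homeomorphisms $\mathrm{d}_W(f,g)=\mathrm{d}_{C^0}(f,g)+\mathrm{d}'_W(f,g)+\mathrm{d}'_W(f^{-1},g^{-1})$. *)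

From Stdlib Require Import Reals Lra ZArith List Classical ClassicalEpsilon.
Open Scope R_scope.

Definition is_metric {X : Type} (d : X -> X -> R) : Prop :=
  (forall x y, 0 <= d x y) /\
  (forall x y, d x y = 0 <-> x = y) /\
  (forall x y, d x y = d y x) /\
  (forall x y z, d x z <= d x y + d y z).

Definition is_open {X : Type} (d : X -> X -> R) (U : X -> Prop) : Prop :=
  forall x, U x -> exists r, 0 < r /\ forall y, d x y < r -> U y.

Definition metric_compact {X : Type} (d : X -> X -> R) : Prop :=
  forall (I : Type) (U : I -> X -> Prop),
    (forall i, is_open d (U i)) ->
    (forall x, exists i, U i x) ->
    exists l : list I, forall x, exists i, In i l /\ U i x.

Definition lipschitz {X : Type} (d : X -> X -> R) (f : X -> X) : Prop :=
  exists L, forall x y, d (f x) (f y) <= L * d x y.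

Definition bilip_homeo {X : Type} (d : X -> X -> R) (f finv : X -> X) : Prop :=
  (forall x, finv (f x) = x) /\ (forall x, f (finv x) = x) /\
  lipschitz d f /\ lipschitz d finv.

Definition iterZ {X : Type} (g ginv : X -> X) (n : Z) (x : X) : X :=
  match n with
  | Z0 => x
  | Zpos p => Nat.iter (Pos.to_nat p) g x
  | Zneg p => Nat.iter (Pos.to_nat p) ginv x
  end.

Definition expansive_with {X : Type} (d : X -> X -> R) (g ginv : X -> X) (delta : R) : Prop :=
  forall x y, (forall n : Z, d (iterZ g ginv n x) (iterZ g ginv n y) <= delta) -> x = y.

Definition hyperbolic_metric {X : Type} (d : X -> X -> R) (f finv : X -> X) : Prop :=
  exists delta lambda, 0 < delta /\ 1 < lambda /\
    forall x y, d x y < delta ->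
      Rmax (d (f x) (f y)) (d (finv x) (finv y)) >= lambda * d x y.

(** Supremum of a set of reals (0 if empty or unbounded; only used on
    nonempty bounded sets or on the empty set). *)
Definition Rsup (E : R -> Prop) : R :=
  match excluded_middle_informative (bound E /\ exists x, E x) with
  | left H => proj1_sig (completeness E (proj1 H) (proj2 H))
  | right _ => 0
  end.

Definition dC0 {X : Type} (d : X -> X -> R) (f finv g ginv : X -> X) : R :=
  Rsup (fun r => exists x, r = d (f x) (g x)) +
  Rsup (fun r => exists x, r = d (finv x) (ginv x)).

Definition dW' {X : Type} (d : X -> X -> R) (f g : X -> X) : R :=
  Rsup (fun r => exists x y, x <> y /\
          r = Rabs (d (f x) (f y) - d (g x) (g y)) / d x y).

Definition dW {X : Type} (d : X -> X -> R) (f finv g ginv : X -> X) : R :=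
  dC0 d f finv g ginv + dW' d f g + dW' d finv ginv.

(* Hyperbolicity is an open condition in the Lipschitz part of d_W: since
   |d(f x, f y) - d(g x, g y)| <= d'_W(f, g) d(x, y), a perturbation g with
   d'_W(f, g), d'_W(f^-1, g^-1) < (lambda - 1)/2 still expands every pair at
   distance < delta by the factor mu = lambda - (lambda - 1)/2 > 1, either
   forwards or backwards.  For such a map, two distinct points whose whole
   orbits stay delta/2-close contradict themselves at an iterate n where
   d(g^n x, g^n y) exceeds the supremum of the orbit distances divided by mu. *)

From Stdlib Require Import Reals ZArith.
From Stdlib Require Import Lra Lia Classical ClassicalEpsilon.
Open Scope R_scope.

Lemma Rsup_ge0 (E : R -> Prop) : (forall r, E r -> 0 <= r) -> 0 <= Rsup E.
Proof.
  intros HE; unfold Rsup.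
  destruct excluded_middle_informative as [H | _]; [| lra].
  destruct completeness as [m Hm]; simpl; destruct Hm as [Hub _].
  destruct (proj2 H) as [r Hr]; apply Rle_trans with r; auto.
Qed.

Lemma Rsup_ub (E : R -> Prop) (r : R) : bound E -> E r -> r <= Rsup E.
Proof.
  intros Hb Hr; unfold Rsup.
  destruct excluded_middle_informative as [H | H].
  - destruct completeness as [m Hm]; simpl; apply Hm, Hr.
  - exfalso; apply H; eauto.
Qed.

Lemma exists_near_sup (E : R -> Prop) (r0 mu : R) :
  bound E -> E r0 -> 0 < r0 -> 1 < mu ->
  exists r, E r /\ forall s, E s -> s < mu * r.
Proof.
  intros Hb Hr0 Hpos Hmu.
  destruct (completeness E Hb (ex_intro _ r0 Hr0)) as [m [Hub Hlub]].
  assert (Hm : r0 <= m) by auto.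
  assert (Hdiv : m / mu * mu = m) by (field; lra).
  apply NNPP; intros Hno.
  assert (Hq : is_upper_bound E (m / mu)).
  { intros r Hr; apply Rnot_lt_le; intros Hlt; apply Hno.
    exists r; split; [exact Hr |].
    intros s Hs; specialize (Hub s Hs); nra. }
  specialize (Hlub _ Hq); nra.
Qed.

Section Metric.

Context {X : Type} (d : X -> X -> R).
Hypothesis Hd : is_metric d.

Lemma dist_pos (x y : X) : x <> y -> 0 < d x y.
Proof.
  destruct Hd as [Hn [He _]]; intros Hxy.
  destruct (Hn x y) as [Hlt | Heq]; [exact Hlt |].
  exfalso; apply Hxy, He; auto.
Qed.

Lemma dist_refl (x : X) : d x x = 0.
Proof. destruct Hd as [_ [He _]]; apply He; reflexivity. Qed.

Lemma dC0_ge0 (f finv g ginv : X -> X) : 0 <= dC0 d f finv g ginv.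
Proof.
  destruct Hd as [Hn _]; unfold dC0.
  assert (H : forall a b : X -> X,
             0 <= Rsup (fun r => exists x, r = d (a x) (b x))).
  { intros a b; apply Rsup_ge0; intros r [x ->]; apply Hn. }
  pose proof (H f g); pose proof (H finv ginv); lra.
Qed.

Lemma dW'_ge0 (f g : X -> X) : 0 <= dW' d f g.
Proof.
  apply Rsup_ge0; intros r [x [y [Hxy ->]]].
  apply Rmult_le_pos; [apply Rabs_pos |].
  left; apply Rinv_0_lt_compat, dist_pos, Hxy.
Qed.

Lemma dW'_bound (f g : X -> X) : lipschitz d f -> lipschitz d g ->
  forall x y, Rabs (d (f x) (f y) - d (g x) (g y)) <= dW' d f g * d x y.
Proof.
  destruct Hd as [Hn _]; intros [Lf HLf] [Lg HLg] x y.
  destruct (classic (x = y)) as [<- | Hxy].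
  - rewrite !dist_refl, Rminus_0_r, Rabs_R0; lra.
  - assert (Hb : bound (fun r => exists x y, x <> y /\
                   r = Rabs (d (f x) (f y) - d (g x) (g y)) / d x y)).
    { exists (Rabs Lf + Rabs Lg); intros r [a [b [Hab ->]]].
      pose proof (dist_pos a b Hab).
      specialize (HLf a b); specialize (HLg a b).
      pose proof (Hn (f a) (f b)); pose proof (Hn (g a) (g b)).
      pose proof (Rle_abs Lf); pose proof (Rle_abs Lg).
      apply Rmult_le_reg_r with (d a b); [lra |].
      unfold Rdiv; rewrite Rmult_assoc, Rinv_l, Rmult_1_r by lra.
      apply Rabs_le; split; nra. }
    pose proof (dist_pos x y Hxy).
    pose proof (Rsup_ub _ _ Hb (ex_intro _ x (ex_intro _ y (conj Hxy eq_refl))))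
      as Hle.
    fold (dW' d f g) in Hle.
    apply (Rmult_le_compat_r (d x y)) in Hle; [| lra].
    unfold Rdiv in Hle; rewrite Rmult_assoc, Rinv_l, Rmult_1_r in Hle by lra.
    exact Hle.
Qed.

Definition expanding_below (g ginv : X -> X) (delta mu : R) : Prop :=
  forall x y, d x y < delta ->
    Rmax (d (g x) (g y)) (d (ginv x) (ginv y)) >= mu * d x y.

Lemma expanding_below_perturb (f finv g ginv : X -> X) (delta lambda eps : R) :
  lipschitz d f -> lipschitz d finv -> lipschitz d g -> lipschitz d ginv ->
  expanding_below f finv delta lambda ->
  dW' d f g <= eps -> dW' d finv ginv <= eps ->
  expanding_below g ginv delta (lambda - eps).
Proof.
  destruct Hd as [Hn _].
  intros Lf Lfi Lg Lgi Hexp Hfg Hfgi x y Hxy.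
  specialize (Hexp x y Hxy).
  pose proof (dW'_bound f g Lf Lg x y) as B1.
  pose proof (dW'_bound finv ginv Lfi Lgi x y) as B2.
  pose proof (Rle_abs (d (f x) (f y) - d (g x) (g y))).
  pose proof (Rle_abs (d (finv x) (finv y) - d (ginv x) (ginv y))).
  pose proof (Hn x y).
  assert (dW' d f g * d x y <= eps * d x y) by (apply Rmult_le_compat_r; lra).
  assert (dW' d finv ginv * d x y <= eps * d x y)
    by (apply Rmult_le_compat_r; lra).
  unfold Rmax in *.
  destruct (Rle_dec (d (f x) (f y)) (d (finv x) (finv y)));
  destruct (Rle_dec (d (g x) (g y)) (d (ginv x) (ginv y))); lra.
Qed.

End Metric.

Lemma iterZ_opp {X : Type} (g ginv : X -> X) (n : Z) (x : X) :
  iterZ ginv g (- n) x = iterZ g ginv n x.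
Proof. destruct n; reflexivity. Qed.

Lemma iterZ_succ {X : Type} (g ginv : X -> X)
  (Hg : forall x, g (ginv x) = x) (n : Z) (x : X) :
  g (iterZ g ginv n x) = iterZ g ginv (Z.succ n) x.
Proof.
  destruct n as [| p | p]; [reflexivity | |].
  - simpl; rewrite Pos.add_1_r, Pos2Nat.inj_succ; reflexivity.
  - destruct (Pos.succ_pred_or p) as [-> | <-]; [apply Hg |].
    replace (Z.succ (Zneg (Pos.succ (Pos.pred p)))) with (Zneg (Pos.pred p))
      by lia.
    simpl; rewrite Pos2Nat.inj_succ; simpl; apply Hg.
Qed.

Lemma iterZ_pred {X : Type} (g ginv : X -> X)
  (Hginv : forall x, ginv (g x) = x) (n : Z) (x : X) :
  ginv (iterZ g ginv n x) = iterZ g ginv (Z.pred n) x.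
Proof.
  rewrite <- iterZ_opp, (iterZ_succ ginv g Hginv), <- (iterZ_opp g ginv).
  f_equal; lia.
Qed.

Lemma expanding_below_expansive {X : Type} (d : X -> X -> R) (g ginv : X -> X)
  (delta mu c : R) :
  is_metric d -> (forall x, g (ginv x) = x) -> (forall x, ginv (g x) = x) ->
  1 < mu -> c < delta -> expanding_below d g ginv delta mu ->
  expansive_with d g ginv c.
Proof.
  intros Hd Hg Hginv Hmu Hc Hexp x y Hall.
  apply NNPP; intros Hxy.
  set (E := fun r => exists n, r = d (iterZ g ginv n x) (iterZ g ginv n y)).
  assert (Hb : bound E) by (exists c; intros r [n ->]; apply Hall).
  destruct (exists_near_sup E (d x y) mu Hb (ex_intro _ 0%Z eq_refl)
              (dist_pos d Hd x y Hxy) Hmu) as [r [[n ->] Hnear]].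
  specialize (Hexp _ _ (Rle_lt_trans _ _ _ (Hall n) Hc)).
  rewrite iterZ_succ, iterZ_succ, iterZ_pred, iterZ_pred in Hexp by assumption.
  assert (Hs : forall m, E (d (iterZ g ginv m x) (iterZ g ginv m y)))
    by (intros m; exists m; reflexivity).
  pose proof (Hnear _ (Hs (Z.succ n))); pose proof (Hnear _ (Hs (Z.pred n))).
  unfold Rmax in Hexp; destruct Rle_dec in Hexp; lra.
Qed.

Theorem theorem2 (X : Type) (d : X -> X -> R)
  (Hd : is_metric d) (Hc : metric_compact d)
  (f finv : X -> X) (Hf : bilip_homeo d f finv)
  (Hhyp : hyperbolic_metric d f finv) :
  exists eps delta, 0 < eps /\ 0 < delta /\
    forall g ginv : X -> X, bilip_homeo d g ginv ->
      dW d f finv g ginv < eps -> expansive_with d g ginv delta.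
Proof.
  destruct Hhyp as [delta [lambda [Hdelta [Hlambda Hexp]]]].
  exists ((lambda - 1) / 2), (delta / 2); split; [lra | split; [lra |]].
  intros g ginv [Hg1 [Hg2 [Lg Lgi]]] HW.
  destruct Hf as [_ [_ [Lf Lfi]]].
  unfold dW in HW.
  pose proof (dC0_ge0 d Hd f finv g ginv).
  pose proof (dW'_ge0 d Hd f g); pose proof (dW'_ge0 d Hd finv ginv).
  apply (expanding_below_expansive d g ginv delta (lambda - (lambda - 1) / 2));
    try assumption; try lra.
  apply (expanding_below_perturb d Hd f finv); try assumption; lra.
Qed.
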